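(* Let $G$ be a finite group, $m$ a positive integer and $n$ a positive odd integer. Then $\mathrm{Pow}(G)\cong \mathrm{Pow}\big((\prod_{i=1}^{m}\mathbb{Z}_2)\times\mathbb{Z}_n\big)$ if and only if $G\cong (\prod_{i=1}^{m}\mathbb{Z}_2)\times\mathbb{Z}_n$.
   Context: All groups are finite. $\mathbb{Z}_k$ denotes the cyclic group of order $k$, and $\prod_{i=1}^m\mathbb{Z}_2$ the direct product of $m$ copies of $\mathbb{Z}_2$. For a group $X$, the power graph $\mathrm{Pow}(X)$ is the simple graph with vertex set $X$ in which two distinct vertices $x,y$ are adjacent if and only if $y\in\langle x\rangle$ or $x\in\langle y\rangle$. *)

From mathcomp Require Import all_boot all_fingroup all_algebra all_solvable.
Set Implicit Arguments. Unset Strict Implicit. Unset Printing Implicit Defensive.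

Local Open Scope group_scope.

Definition pow_adj (gT : finGroupType) (G : {set gT}) (x y : gT) : bool :=
  [&& x \in G, y \in G, x != y & (y \in <[x]>) || (x \in <[y]>)].

Definition pow_graph_iso (gT hT : finGroupType) (G : {set gT}) (H : {set hT}) : Prop :=
  exists f : gT -> hT,
    [/\ {in G &, injective f}, f @: G = H &
        {in G &, forall x y, pow_adj G x y = pow_adj H (f x) (f y)}].

(* (prod_{i=1}^m Z_2) x Z_n, realized as the (additive) group
   'rV['Z_2]_m x Zp n inside the external direct product 'rV['Z_2]_m * 'Z_n.
   Zp n is the full group 'Z_n for n > 1 and trivial for n = 1. *)
Definition Z2m_Zn (m n : nat) : {group ('rV['Z_2]_m * 'Z_n)} :=
  (setX [set: 'rV['Z_2]_m] (Zp n))%G.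

From mathcomp Require Import all_boot all_fingroup all_algebra all_solvable.
Set Implicit Arguments. Unset Strict Implicit. Unset Printing Implicit Defensive.
Local Open Scope group_scope.

(* Let H = E x C with E elementary abelian of order 2^m and C cyclic of odd
   order n, and let f be an isomorphism Pow(G) -> Pow(H).  Closed
   neighbourhoods, their inclusions, domination and the sizes of classes of
   closed twins are graph invariants, hence transported by f.  Inversion pairs
   off the non-involutions of a twin class, so its size has the parity of its
   number of involutions; in H no involution is a twin of a non-involution, so
   f maps involutions to involutions.  In H, a vertex w <> 1 whose
   neighbourhood lies in that of an involution t equals t; as the
   neighbourhood of y lies in that of y^2 when #[y] = 4, G has no element of
   order 4.  So a Sylow 2-subgroup P of G has exponent 2, and counting
   involutions shows that it contains all of them, hence is normal.  The
   vertices adjacent to no involution are the nontrivial elements of odd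
   order; in H they all lie in the neighbourhood of (a, g) with a <> 1 and
   <g> = C, and pulling this back gives y in G such that <y^2> is exactly the
   set of odd-order elements of G, a normal cyclic subgroup of order n.  Hence
   G = P x <y^2> is isomorphic to H. *)

Section GroupFacts.
Variable gT : finGroupType.
Implicit Types (X : {set gT}) (G K P : {group gT}) (x y t u : gT).

Lemma order_le2 x : (#[x] <= 2) = (x^-1 == x).
Proof.
rewrite eq_invg_mul -[x * x]/(x ^+ 2) -order_dvdn.
apply/idP/idP=> [|/dvdn_leq]; last exact.
by case: #[x] (order_gt0 x) => [|[|[|]]].
Qed.

Lemma order2_mem_cycle t u : #[t] = 2 -> u \in <[t]> -> u = 1 \/ u = t.
Proof. by move/cycle2g->; case/set2P; [left | right]. Qed.

Lemma even_card_invg_closed X :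
  {in X, forall u, u^-1 \in X /\ u^-1 != u} -> ~~ odd #|X|.
Proof.
elim: {X}_.+1 {-2}X (ltnSn #|X|) => // k IH X ltXk closedX.
have [->|[u uX]] := set_0Vmem X; first by rewrite cards0.
have [uVX Vu] := closedX u uX.
set Y := X :\ u :\ u^-1.
have cardX : #|X| = #|Y|.+2.
  by rewrite (cardsD1 u) uX (cardsD1 u^-1) !inE Vu uVX.
rewrite cardX /= negbK; apply: IH => [|v]; first by rewrite cardX ltnS in ltXk; apply: ltnW.
rewrite !inE => /and3P[vVu vu vX]; have [vVX Vv] := closedX v vX.
by rewrite Vv vVX (can2_eq invgK invgK) invgK vu (can2_eq invgK invgK) vVu.
Qed.

Lemma mem_cycle_sqr y u : odd #[u] -> u \in <[y]> -> u \in <[y ^+ 2]>.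
Proof.
move=> u_odd /cycleP[i def_u].
have /eqP gen_u : generator <[u]> (u ^+ 2) by rewrite generator_coprime coprimen2.
apply: subsetP (cycle_id u); rewrite gen_u cycle_subG def_u -expgM mulnC expgM.
exact: mem_cycle.
Qed.

Lemma order_dvdn2_2elt G p : {in G, forall y, #[y] != 4} -> p \in G -> 2.-elt p ->
  #[p] %| 2.
Proof.
move=> order_neq4 pG /p_natP[[|[|k]] op]; rewrite op //.
case/negP: (order_neq4 _ (groupX (2 ^ k) pG)).
have dvd_k : 2 ^ k %| #[p] by rewrite op dvdn_exp2l // !leqW.
by rewrite orderXdiv // op !expnS mulnA mulnK ?expn_gt0.
Qed.

Lemma normal_order_closed G K (pr : pred nat) :
  K \subset G -> {in G, forall x, (x \in K) = pr #[x]} -> K <| G.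
Proof.
move=> sKG memK; rewrite /normal sKG; apply/normsP=> x xG; apply/setP=> u.
rewrite mem_conjg; have [uG | uG] := boolP (u \in G).
  by rewrite !memK ?orderJ ?groupJ ?groupV.
rewrite (contraNF (subsetP sKG u)) // (contraNF (subsetP sKG _)) //.
by rewrite groupJr ?groupV.
Qed.

Lemma coprime_normal_dprod G P K : P <| G -> K <| G -> coprime #|P| #|K| ->
  (#|P| * #|K|)%N = #|G| -> P \x K = G.
Proof.
move=> /andP[sPG nPG] /andP[sKG nKG] coPK cardG.
have tiPK := coprime_TIg coPK.
have cPK : K \subset 'C(P).
  rewrite centsC; apply/commG1P/trivgP; rewrite -tiPK commg_subI // subsetI subxx.
    exact: subset_trans nKG.
  exact: subset_trans nPG.
by rewrite dprodE //; apply/eqP; rewrite eqEcard mul_subG //= TI_cardMg // cardG.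
Qed.

End GroupFacts.

Section PowerGraph.
Variable gT : finGroupType.
Implicit Types (X : {set gT}) (G : {group gT}) (x y u t : gT).

Definition pow_nbhd X x := [set u in X | (u \in <[x]>) || (x \in <[u]>)].
Definition pow_twins X x := [set u in X | pow_nbhd X u == pow_nbhd X x].
Definition involutions X := [set t in X | #[t] == 2].
Definition inv_nonadj X :=
  [set u in X | [forall t in involutions X, u \notin pow_nbhd X t]].

Lemma pow_nbhdE X x u : x \in X -> u \in X ->
  (u \in pow_nbhd X x) = (u == x) || pow_adj X x u.
Proof.
move=> xX uX; rewrite /pow_adj inE xX uX /=.
by have [->|] := eqVneq u x; rewrite ?cycle_id.
Qed.

Lemma pow_nbhd_sub X x : pow_nbhd X x \subset X.
Proof. by apply/subsetP=> u; rewrite inE => /andP[]. Qed.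

Lemma pow_nbhd_id X x : x \in X -> x \in pow_nbhd X x.
Proof. by move=> xX; rewrite inE xX cycle_id. Qed.

Lemma pow_nbhdV X x : pow_nbhd X x^-1 = pow_nbhd X x.
Proof. by apply/setP=> u; rewrite !inE cycleV groupV. Qed.

Lemma pow_nbhd_group1 G x : 1 \in pow_nbhd G x.
Proof. by rewrite inE !group1. Qed.

Lemma pow_nbhd1 G : pow_nbhd G 1 = G.
Proof. by apply/setP=> u; rewrite inE group1 orbT andbT. Qed.

Lemma pow_twins_sub X x : pow_twins X x \subset X.
Proof. by apply/subsetP=> u; rewrite inE => /andP[]. Qed.

Lemma involutions_sub X : involutions X \subset X.
Proof. by apply/subsetP=> u; rewrite inE => /andP[]. Qed.

Lemma inv_nonadj_sub X : inv_nonadj X \subset X.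
Proof. by apply/subsetP=> u; rewrite inE => /andP[]. Qed.

Lemma coprime_order_notin_pow_nbhd X x u : coprime #[x] #[u] -> u != 1 -> x != 1 ->
  u \notin pow_nbhd X x.
Proof.
move=> co u1 x1; rewrite inE negb_and negb_or; apply/orP; right.
apply/andP; split; apply/negP=> /order_dvdG; rewrite -orderE => dv.
  by move: (coprime_dvdl dv co); rewrite /coprime gcdnn order_eq1 (negbTE u1).
by move: (coprime_dvdr dv co); rewrite /coprime gcdnn order_eq1 (negbTE x1).
Qed.

Lemma pow_nbhd_sub_sqr X y : #[y] = 4 ->
  pow_nbhd X y \subset pow_nbhd X (y ^+ 2).
Proof.
move=> oy; apply/subsetP=> u /setIdP[uX y_u]; apply/setIdP; split=> //.
case/orP: y_u => [/cycleP[k ->] | /(groupX 2) ->]; last by rewrite orbT.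
have [k_odd | k_even] := boolP (odd k); last first.
  by rewrite -(odd_double_half k) (negbTE k_even) add0n -mul2n expgM mem_cycle.
have /eqP <- : generator <[y]> (y ^+ k).
  by rewrite generator_coprime oy -[4]/(2 ^ 2)%N coprime_pexpl // coprime2n.
by rewrite mem_cycle orbT.
Qed.

Lemma involutions_pow_twins X t : t \in X -> #[t] = 2 ->
  involutions (pow_twins X t) = [set t].
Proof.
move=> tX ot; apply/setP=> u; rewrite !inE.
apply/idP/eqP=> [/andP[/andP[uX /eqP twin_u] /eqP ou] | ->]; last by rewrite tX eqxx ot.
have : u \in pow_nbhd X t by rewrite -twin_u pow_nbhd_id.
rewrite inE uX => /orP[/(order2_mem_cycle ot) | /(order2_mem_cycle ou)] [one | //].
- by move: ou; rewrite one order1.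
- by move: ot; rewrite one order1.
Qed.

(* Inversion pairs off the twins of order > 2; no twin has order 1, since 1
   dominates while x does not. *)
Lemma odd_card_pow_twins G x : x \in G -> pow_nbhd G x != G ->
  odd #|pow_twins G x| = odd #|involutions (pow_twins G x)|.
Proof.
move=> xG nondom; set T := pow_twins G x.
rewrite -(cardsID (involutions T) T) (setIidPr (involutions_sub T)) oddD.
rewrite (negbTE (@even_card_invg_closed _ (T :\: involutions T) _)) ?addbF // => u.
case/setDP=> uT not_inv_u; move: (uT); rewrite inE => /andP[uG /eqP twin_u].
have ord_u : #[u] != 2 by move: not_inv_u; rewrite inE uT.
have VuT : u^-1 \in T by rewrite inE groupV uG pow_nbhdV twin_u eqxx.
rewrite inE VuT inE VuT orderV (negbTE ord_u); split=> //.
rewrite -order_le2 leq_eqVlt (negbTE ord_u) ltnS leqNgt order_gt1 negbK.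
by apply: contra nondom => /eqP u1; rewrite -twin_u u1 pow_nbhd1.
Qed.

Lemma inv_nonadj_odd G : involutions G != set0 ->
  inv_nonadj G = [set u in G | odd #[u]] :\ 1.
Proof.
case/set0Pn=> t0 t0I; apply/setP=> u.
apply/setIdP/setD1P=> [[uG /forall_inP nonadj] | [u1 /setIdP[uG u_odd]]]; last first.
  split=> //; apply/forall_inP=> t /setIdP[_ /eqP ot].
  by apply: coprime_order_notin_pow_nbhd; rewrite ?ot ?coprime2n // -order_gt1 ot.
split; first by apply: contraTneq (nonadj _ t0I) => ->; rewrite pow_nbhd_group1.
rewrite inE uG /=; apply/contraT => u_even; set d := #[u] %/ 2.
have def_u : #[u] = (d * 2)%N by rewrite divnK ?dvdn2.
have d_gt0 : 0 < d by move: (order_gt0 u); rewrite def_u muln_gt0 => /andP[].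
have sI : u ^+ d \in involutions G.
  by rewrite inE groupX // orderXdiv def_u ?dvdn_mulr // mulKn.
by move: (nonadj _ sI); rewrite inE uG mem_cycle orbT.
Qed.

End PowerGraph.

Section PowerGraphIso.
Variables (gT hT : finGroupType) (X : {set gT}) (Y : {set hT}) (f : gT -> hT).
Hypotheses (f_inj : {in X &, injective f}) (f_onto : f @: X = Y)
  (f_adj : {in X &, forall x y, pow_adj X x y = pow_adj Y (f x) (f y)}).
Implicit Types (S : {set gT}) (T : {set hT}).

Lemma pow_iso_mem x : x \in X -> f x \in Y.
Proof. by move=> xX; rewrite -f_onto imset_f. Qed.

Lemma card_inj_imset S : S \subset X -> #|f @: S| = #|S|.
Proof. by move=> sSX; rewrite card_in_imset //; apply: sub_in2 f_inj; apply/subsetP. Qed.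

Lemma mem_inj_imset S u : S \subset X -> u \in X -> (f u \in f @: S) = (u \in S).
Proof.
move=> sSX uX; apply/imsetP/idP=> [[v vS /f_inj-> //]|]; last by exists u.
exact: (subsetP sSX).
Qed.

Lemma inj_imset_subset S1 S2 : S1 \subset X -> S2 \subset X ->
  (f @: S1 \subset f @: S2) = (S1 \subset S2).
Proof.
move=> sS1X sS2X; apply/idP/idP=> [sub|]; last exact: imsetS.
apply/subsetP=> v vS1; have vX := subsetP sS1X v vS1.
by rewrite -(mem_inj_imset sS2X vX) (subsetP sub) ?imset_f.
Qed.

Lemma pow_iso_imsetE S T : S \subset X -> T \subset Y ->
  {in X, forall u, (f u \in T) = (u \in S)} -> f @: S = T.
Proof.
move=> sSX sTY fST; apply/setP=> z; apply/imsetP/idP=> [[u uS ->]|zT].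
  by rewrite fST // (subsetP sSX).
have /imsetP[u uX zu] : z \in f @: X by rewrite f_onto (subsetP sTY).
by exists u; rewrite // -fST -?zu.
Qed.

Lemma pow_iso_mem_nbhd x u : x \in X -> u \in X ->
  (f u \in pow_nbhd Y (f x)) = (u \in pow_nbhd X x).
Proof.
move=> xX uX; rewrite !pow_nbhdE ?pow_iso_mem // -f_adj //.
by rewrite (inj_in_eq f_inj).
Qed.

Lemma pow_iso_nbhd x : x \in X -> f @: pow_nbhd X x = pow_nbhd Y (f x).
Proof.
move=> xX; apply: pow_iso_imsetE; rewrite ?pow_nbhd_sub // => u.
exact: pow_iso_mem_nbhd.
Qed.

Lemma pow_iso_nbhd_subset x y : x \in X -> y \in X ->
  (pow_nbhd Y (f y) \subset pow_nbhd Y (f x)) = (pow_nbhd X y \subset pow_nbhd X x).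
Proof. by move=> xX yX; rewrite -!pow_iso_nbhd ?inj_imset_subset ?pow_nbhd_sub. Qed.

Lemma pow_iso_nbhd_eq x y : x \in X -> y \in X ->
  (pow_nbhd Y (f y) == pow_nbhd Y (f x)) = (pow_nbhd X y == pow_nbhd X x).
Proof. by move=> xX yX; rewrite !eqEsubset !pow_iso_nbhd_subset. Qed.

Lemma pow_iso_dominating x : x \in X -> (pow_nbhd Y (f x) == Y) = (pow_nbhd X x == X).
Proof.
move=> xX; rewrite -pow_iso_nbhd // -{1}f_onto !eqEsubset.
by rewrite !inj_imset_subset ?pow_nbhd_sub.
Qed.

Lemma card_pow_iso_twins x : x \in X -> #|pow_twins Y (f x)| = #|pow_twins X x|.
Proof.
move=> xX; rewrite -card_inj_imset ?pow_twins_sub //.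
rewrite (@pow_iso_imsetE _ (pow_twins Y (f x))) ?pow_twins_sub // => u uX.
by rewrite !inE uX pow_iso_mem // pow_iso_nbhd_eq.
Qed.

End PowerGraphIso.

Lemma expg_pair (aT bT : finGroupType) (x : aT * bT) k : x ^+ k = (x.1 ^+ k, x.2 ^+ k).
Proof. by elim: k => [|k IHk]; [case: x | rewrite !expgS IHk]. Qed.

Lemma pair_eq1 (aT bT : finGroupType) (x : aT * bT) : (x == 1) = (x.1 == 1) && (x.2 == 1).
Proof. by case: x. Qed.

Lemma mem_cycle_pair (aT bT : finGroupType) (x y : aT * bT) :
  x \in <[y]> -> x.1 \in <[y.1]> /\ x.2 \in <[y.2]>.
Proof. by case/cycleP=> k ->; rewrite expg_pair !mem_cycle. Qed.

Section ElementaryTimesOdd.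
Variables (aT bT : finGroupType) (A : {group aT}) (B : {group bT}).
Hypotheses (A_exp2 : {in A, forall a, a ^+ 2 = 1}) (B_odd : odd #|B|).
Local Notation H := (setX A B).
Implicit Types (a : aT) (b : bT).

Lemma odd_order_B b : b \in B -> odd #[b].
Proof. by move=> bB; apply: dvdn_odd (order_dvdG bB) B_odd. Qed.

Lemma expg_setX a b k : a \in A -> (a, b) ^+ k = (if odd k then a else 1, b ^+ k).
Proof.
move=> aA; rewrite expg_pair /= -(expg_mod k (A_exp2 aA)) modn2.
by case: (odd k); rewrite ?expg1.
Qed.

Lemma mem_cycle_setX1 a b : a \in A -> b \in B -> (a, 1) \in <[(a, b)]>.
Proof.
move=> aA bB; apply/cycleP; exists #[b].
by rewrite expg_setX // odd_order_B // expg_order.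
Qed.

Lemma mem_cycle_set1X a b : a \in A -> b \in B -> (1, b) \in <[(a, b)]>.
Proof.
move=> aA bB; apply/cycleP; exists #[b].+1.
by rewrite expg_setX //= odd_order_B // expgS expg_order mulg1.
Qed.

Lemma expg2_eq1_B b : b \in B -> b ^+ 2 = 1 -> b = 1.
Proof.
move=> bB /eqP; rewrite -order_dvdn => /(dvdn_leq (ltn0Sn 1)) le_b2; apply/eqP.
by rewrite -order_eq1; move: (odd_order_B bB) (order_gt0 b) le_b2; case: #[b] => [|[|[|]]].
Qed.

Lemma involutions_setX : involutions H = setX A 1 :\ 1.
Proof.
apply/setP=> -[a b]; rewrite !inE /= xpair_eqE.
case aA: (a \in A); last by rewrite !andbF.
have [-> | b1] /= := eqVneq b 1.
  have [-> | a1] /= := eqVneq a 1; first by rewrite order1 andbF.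
  by rewrite group1 (@nt_prime_order _ 2) ?expg_setX ?xpair_eqE ?(negbTE a1) ?expg1n.
rewrite andbF; apply: contraNF b1 => /andP[bB /eqP o2].
have /(congr1 snd) := expg_order (a, b); rewrite o2 expg_pair /= => /(expg2_eq1_B bB)->.
by [].
Qed.

Lemma card_involutions_setX : #|involutions H| = #|A|.-1.
Proof.
have := cardsD1 (1 : aT * bT) (setX A 1).
by rewrite in_setX !group1 cardsX cards1 muln1 involutions_setX => ->.
Qed.

Lemma mem_involutions_setX a : a \in A -> a != 1 -> (a, 1) \in involutions H.
Proof. by move=> aA a1; rewrite involutions_setX !inE pair_eq1 /= (negbTE a1) aA eqxx. Qed.

Lemma setX_nbhd_sub_involution t w : t \in involutions H -> w \in H -> w != 1 ->
  pow_nbhd H w \subset pow_nbhd H t -> w = t.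
Proof.
move=> tI; have ot : #[t] = 2 by case/setIdP: tI => _ /eqP.
case: t tI ot => ta tb; rewrite involutions_setX => /setD1P[t1 /setXP[taA /set1P tb1]].
subst tb; have ta1 : ta != 1 by move: t1; rewrite pair_eq1 eqxx andbT.
case: w => wa wb ot /setXP[waA wbB] w1 sub.
have : (wa, wb) \in pow_nbhd H (ta, 1) by rewrite (subsetP sub) ?pow_nbhd_id ?inE ?waA.
rewrite inE => /andP[_ /orP[/(order2_mem_cycle ot)[w_eq1 | //] | /cycleP[k]]].
  by rewrite w_eq1 eqxx in w1.
rewrite expg_setX // => -[ta_eq _].
have wa_ta : wa = ta by move: ta_eq ta1; case: (odd k) => -> //; rewrite eqxx.
subst wa.
have : (1, wb) \in pow_nbhd H (ta, 1).
  by rewrite (subsetP sub) // inE in_setX group1 wbB mem_cycle_set1X.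
rewrite inE => /andP[_ /orP[/(order2_mem_cycle ot)[[->] // | [ta_eq1]] | ]].
  by rewrite ta_eq1 eqxx in ta1.
by case/mem_cycle_pair; rewrite /= cycle1 => /set1P ta_eq1; rewrite ta_eq1 eqxx in ta1.
Qed.

Lemma odd_card_setX_twins z : z \in H -> pow_nbhd H z != H ->
  odd #|pow_twins H z| = (#[z] == 2).
Proof.
move=> zH nondom; rewrite odd_card_pow_twins //.
have [oz | noz] := eqVneq #[z] 2; first by rewrite involutions_pow_twins // cards1.
suff -> : involutions (pow_twins H z) = set0 by rewrite cards0.
apply/setP=> u; rewrite in_set0; apply/negP=> /setIdP[/setIdP[uH /eqP twin_u] ou].
have z1 : z != 1 by apply: contraNneq nondom => ->; rewrite pow_nbhd1.
have uI : u \in involutions H by rewrite inE uH.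
by move: noz; rewrite (setX_nbhd_sub_involution uI zH z1) ?twin_u ?(eqP ou).
Qed.

Lemma setX_dominating z : 2 < #|A| -> z \in H -> pow_nbhd H z = H -> z = 1.
Proof.
case: z => za zb A_gt2 /[dup] zH /setXP[zaA _] dom; apply/eqP/negPn/negP => z1.
have [a aA a_new] : exists2 a, a \in A & a \notin [set 1; za].
  apply/subsetPn; apply: contraTN (A_gt2) => /subset_leq_card le_A2.
  by rewrite -leqNgt (leq_trans le_A2) // cards2; case: (_ != _).
move: a_new; rewrite !inE negb_or => /andP[a1 a_za].
have oa : #[(a, 1) : aT * bT] = 2.
  by case/setIdP: (mem_involutions_setX aA a1) => _ /eqP.
have : (a, 1) \in pow_nbhd H (za, zb) by rewrite dom inE /= aA group1.
rewrite inE => /andP[_ /orP[/cycleP[k] | /(order2_mem_cycle oa)[z_eq1 | [za_a _]]]].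
- by rewrite expg_setX // => -[]; case: (odd k) => a_eq _; rewrite a_eq eqxx ?orbT in a1 a_za.
- by rewrite z_eq1 eqxx in z1.
- by rewrite za_a eqxx in a_za.
Qed.

Lemma inv_nonadj_setX : 1 < #|A| -> inv_nonadj H = setX 1 B :\ 1.
Proof.
rewrite cardG_gt1 => /trivgPn[a0 a0A a01].
have t0I := mem_involutions_setX a0A a01.
apply/eqP; rewrite eqEsubset; apply/andP; split; apply/subsetP; last first.
  move=> u /setD1P[u1 u1B]; have uH : u \in H by rewrite (subsetP (setXS (sub1G A) (subxx B))).
  rewrite inE uH; apply/forall_inP=> t /setIdP[_ /eqP ot].
  apply: coprime_order_notin_pow_nbhd => //; last by rewrite -order_gt1 ot.
  by rewrite ot coprime2n (dvdn_odd (order_dvdG u1B)) // cardsX cards1 mul1n.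
move=> [ua ub] /setIdP[/[dup] uH /setXP[uaA ubB] /forall_inP nonadj].
have u1 : (ua, ub) != 1.
  by apply: contraTneq (nonadj _ t0I) => ->; rewrite pow_nbhd_group1.
rewrite !inE u1 ubB andbT /=; apply/contraT => ua1.
have tI := mem_involutions_setX uaA ua1.
have : (ua, ub) \in pow_nbhd H (ua, 1) by apply/setIdP; rewrite mem_cycle_setX1 ?orbT.
by rewrite (negbTE (nonadj _ tI)).
Qed.

Lemma card_inv_nonadj_setX : 1 < #|A| -> #|inv_nonadj H| = #|B|.-1.
Proof.
move=> A_gt1; have := cardsD1 (1 : aT * bT) (setX 1 B).
by rewrite in_setX !group1 cardsX cards1 mul1n inv_nonadj_setX => // ->.
Qed.

Lemma setX_nbhd_sup_inv_nonadj g : B :=: <[g]> -> 1 < #|A| ->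
  exists z t, [/\ z \in H, t \in involutions H, t \in <[z]>
                & inv_nonadj H \subset pow_nbhd H z].
Proof.
move=> defB A_gt1; have /trivgPn[a aA a1] : A :!=: 1 by rewrite -cardG_gt1.
have gB : g \in B by rewrite defB cycle_id.
have sub_g : <[(1, g)]> \subset <[(a, g)]> by rewrite cycle_subG mem_cycle_set1X.
have sub_nbhd : inv_nonadj H \subset pow_nbhd H (a, g).
  rewrite inv_nonadj_setX //; apply/subsetP=> -[_ b] /setD1P[_ /setXP[/set1P-> bB]].
  apply/setIdP; split; first by rewrite inE group1.
  move: bB; rewrite defB => /cycleP[i ->]; apply/orP; left.
  by rewrite (subsetP sub_g) //; apply/cycleP; exists i; rewrite expg_pair /= expg1n.
exists (a, g), (a, 1); split=> //; first by rewrite inE aA.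
  exact: mem_involutions_setX.
exact: mem_cycle_setX1.
Qed.

End ElementaryTimesOdd.

Section PowerGraphRecognition.
Variables (gT aT bT : finGroupType) (G : {group gT}) (A : {group aT}) (B : {group bT}).
Variables (m n : nat) (f : gT -> aT * bT).
Hypotheses (A_exp2 : {in A, forall a, a ^+ 2 = 1}) (card_A : #|A| = (2 ^ m)%N)
  (m_gt0 : 0 < m) (B_cyclic : cyclic B) (card_B : #|B| = n) (n_odd : odd n).
Local Notation H := (setX A B).
Hypotheses (f_inj : {in G &, injective f}) (f_onto : f @: G = H)
  (f_adj : {in G &, forall x y, pow_adj G x y = pow_adj H (f x) (f y)}).

Local Notation mem_f := (pow_iso_mem f_onto).
Local Notation card_f := (card_inj_imset f_inj).
Local Notation mem_nbhd_f := (pow_iso_mem_nbhd f_inj f_onto f_adj).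
Local Notation nbhd_subset_f := (pow_iso_nbhd_subset f_inj f_onto f_adj).
Local Notation dominating_f := (pow_iso_dominating f_inj f_onto f_adj).

Let B_odd : odd #|B|. Proof. by rewrite card_B. Qed.
Let n_gt0 : 0 < n. Proof. by case: n n_odd. Qed.
Let A_gt1 : 1 < #|A|. Proof. by rewrite card_A -{1}(expn0 2) ltn_exp2l. Qed.

Lemma card_pow_iso_source : #|G| = (2 ^ m * n)%N.
Proof. by rewrite -card_A -card_B -cardsX -f_onto card_f. Qed.

Hypothesis m_or_n_gt1 : (1 < m) || (1 < n).

(* If n > 1, an element of odd prime order is not adjacent to x; if n = 1, then
   |A| > 2 and 1 is the only dominating vertex of H. *)
Lemma involution_nondominating x : x \in G -> #[x] = 2 -> pow_nbhd G x != G.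
Proof.
move=> xG ox; apply/negP=> /eqP dom.
have x1 : x != 1 by rewrite -order_gt1 ox.
have [n_gt1 | n_le1] := ltnP 1 n.
  have p_pr := pdiv_prime n_gt1; have p_odd := dvdn_odd (pdiv_dvd n) n_odd.
  have /(Cauchy p_pr)[q qG oq] : pdiv n %| #|G|.
    by rewrite card_pow_iso_source dvdn_mull ?pdiv_dvd.
  have q1 : q != 1 by rewrite -order_gt1 oq prime_gt1.
  have : q \notin pow_nbhd G x by rewrite coprime_order_notin_pow_nbhd // ox oq coprime2n.
  by rewrite dom qG.
have n1 : n = 1%N by apply/eqP; rewrite eqn_leq n_le1; case: n n_odd.
have A_gt2 : 2 < #|A|.
  by move: m_or_n_gt1; rewrite n1 orbF card_A => m_gt1; rewrite -{1}(expn1 2) ltn_exp2l.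
have dom_f1 y : y \in G -> pow_nbhd G y = G -> f y = 1.
  move=> yG dom_y; apply: setX_dominating (mem_f yG) _ => //.
  by apply/eqP; rewrite dominating_f ?dom_y.
have fx1 : f x = f 1 by rewrite !dom_f1 ?pow_nbhd1.
by rewrite (f_inj xG (group1 G) fx1) eqxx in x1.
Qed.

Lemma order_pow_iso_involution x : x \in G -> #[x] = 2 -> #[f x] = 2.
Proof.
move=> xG ox; have nondom := involution_nondominating xG ox.
apply/eqP; rewrite -(odd_card_setX_twins A_exp2 B_odd) ?mem_f //; last first.
  by rewrite dominating_f.
rewrite (card_pow_iso_twins f_inj f_onto f_adj) // odd_card_pow_twins //.
by rewrite involutions_pow_twins // cards1.
Qed.

Lemma order_neq4 y : y \in G -> #[y] != 4.
Proof.
move=> yG; apply/eqP=> oy; set x := y ^+ 2.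
have xG : x \in G by rewrite groupX.
have ox : #[x] = 2 by rewrite orderXdiv oy.
have fxI : f x \in involutions H.
  by rewrite inE mem_f // order_pow_iso_involution.
have sub : pow_nbhd H (f y) \subset pow_nbhd H (f x).
  by rewrite nbhd_subset_f // pow_nbhd_sub_sqr.
have fy1 : f y != 1.
  apply: contraTneq sub => ->; rewrite pow_nbhd1; apply/negP=> sub.
  case/negP: (involution_nondominating xG ox).
  by rewrite -dominating_f // eqEsubset pow_nbhd_sub.
have /(f_inj yG xG) y_sqr :=
  setX_nbhd_sub_involution A_exp2 B_odd fxI (mem_f yG) fy1 sub.
have y1 : y = 1 by apply: (mulgI y); rewrite mulg1 [RHS]y_sqr /x expgS expg1.
by rewrite y1 order1 in oy.
Qed.

Lemma sylow2_exponent2 :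
  exists P : {group gT}, [/\ P \subset G, #|P| = (2 ^ m)%N & {in P, forall x, #[x] %| 2}].
Proof.
have [P sylP] := Sylow_exists 2 G; exists P; split.
- exact: pHall_sub sylP.
- rewrite (card_Hall sylP) card_pow_iso_source p_part lognM ?expn_gt0 ?n_gt0 //.
  by rewrite pfactorK // logn_coprime ?addn0 ?coprime2n.
- move=> x xP; apply: (order_dvdn2_2elt order_neq4).
    exact: subsetP (pHall_sub sylP) x xP.
  exact: mem_p_elt (pHall_pgroup sylP) xP.
Qed.

Lemma pow_iso_involutions_sub : f @: involutions G \subset involutions H.
Proof.
apply/subsetP=> _ /imsetP[x /setIdP[xG /eqP ox] ->].
by rewrite inE mem_f // order_pow_iso_involution.
Qed.

Section Sylow2.
Variable P : {group gT}.
Hypotheses (sPG : P \subset G) (card_P : #|P| = (2 ^ m)%N)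
  (P_exp2 : {in P, forall x, #[x] %| 2}).

Let card_P1 : #|P :\ 1| = #|A|.-1.
Proof. by have := cardsD1 1 P; rewrite group1 card_P card_A => ->. Qed.

Lemma involutions_group : involutions G = P :\ 1.
Proof.
have sub_P1 : P :\ 1 \subset involutions G.
  apply/subsetP=> x /setD1P[x1 xP]; rewrite inE (subsetP sPG) //=.
  by rewrite eqn_leq dvdn_leq ?P_exp2 // order_gt1.
apply/esym/eqP; rewrite eqEcard sub_P1 card_P1 -(card_involutions_setX A_exp2 B_odd).
by rewrite -(card_f (involutions_sub G)) subset_leq_card ?pow_iso_involutions_sub.
Qed.

Lemma pow_iso_involutions : f @: involutions G = involutions H.
Proof.
apply/eqP; rewrite eqEcard pow_iso_involutions_sub (card_involutions_setX A_exp2 B_odd).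
by rewrite (card_f (involutions_sub G)) involutions_group card_P1 /=.
Qed.

Lemma mem_group_exp2 x : x \in G -> #[x] %| 2 -> x \in P.
Proof.
move=> xG ox; have [-> // | x1] := eqVneq x 1.
have : x \in involutions G.
  by rewrite inE xG eqn_leq dvdn_leq // order_gt1.
by rewrite involutions_group => /setD1P[].
Qed.

Lemma inv_nonadj_group : inv_nonadj G = [set u in G | odd #[u]] :\ 1.
Proof.
apply: inv_nonadj_odd; rewrite involutions_group; apply/set0Pn.
have /trivgPn[x xP x1] : P :!=: 1 by rewrite -cardG_gt1 card_P -card_A.
by exists x; apply/setD1P.
Qed.

Lemma pow_iso_inv_nonadj : f @: inv_nonadj G = inv_nonadj H.
Proof.
have sIG := involutions_sub G.
apply: (pow_iso_imsetE f_onto); rewrite ?inv_nonadj_sub // => u uG.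
apply/setIdP/setIdP=> -[_ /forall_inP nonadj]; split; rewrite ?mem_f //.
  apply/forall_inP=> t tI; have tG := subsetP sIG t tI.
  rewrite -mem_nbhd_f // nonadj //.
  by rewrite (subsetP pow_iso_involutions_sub) ?imset_f.
apply/forall_inP=> ft; rewrite -pow_iso_involutions => /imsetP[t tI ->].
by rewrite mem_nbhd_f ?nonadj ?(subsetP sIG t tI).
Qed.

Lemma card_inv_nonadj_group : #|inv_nonadj G| = n.-1.
Proof.
rewrite -(card_f (inv_nonadj_sub G)) pow_iso_inv_nonadj.
by rewrite (card_inv_nonadj_setX A_exp2 B_odd) ?card_B.
Qed.

(* The preimage of z may be 1 (z may dominate, e.g. when H is cyclic); the
   preimage of the twin z^-1 is then used instead. *)
Lemma pow_iso_nontrivial_twin z : z \in H -> z != 1 ->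
  exists2 y, y \in G & y != 1 /\ pow_nbhd H (f y) = pow_nbhd H z.
Proof.
move=> zH z1.
have [y0 y0G fy0] : exists2 y0, y0 \in G & z = f y0 by apply/imsetP; rewrite f_onto.
have [y1 y1G fy1] : exists2 y1, y1 \in G & z^-1 = f y1.
  by apply/imsetP; rewrite f_onto groupV.
have [y0_1 | y0_n1] := eqVneq y0 1; last by exists y0; rewrite -?fy0.
exists y1 => //; split; last by rewrite -fy1 pow_nbhdV.
apply/eqP=> y1_1; have oz : #[z] = 2.
  by apply/eqP; rewrite eqn_leq order_le2 fy1 y1_1 -y0_1 -fy0 eqxx order_gt1 z1.
have : z \in f @: involutions G by rewrite pow_iso_involutions; apply/setIdP; rewrite oz.
case/imsetP=> x /setIdP[xG /eqP ox] zx.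
have x1 : x = 1 by apply: f_inj; rewrite // -zx fy0 y0_1.
by rewrite x1 order1 in ox.
Qed.

Lemma even_cycle_sup_inv_nonadj : exists2 y, y \in G & ~~ odd #[y] /\ inv_nonadj G \subset <[y]>.
Proof.
have [g defB] := cyclicP B_cyclic.
have [z [t [zH tI t_z sub_z]]] := setX_nbhd_sup_inv_nonadj A_exp2 B_odd defB A_gt1.
have z1 : z != 1.
  apply: contraTneq t_z => ->; case/setIdP: tI => _.
  by rewrite cycle1 inE -order_eq1 => /eqP->.
have [y yG [y1 nbhd_y]] := pow_iso_nontrivial_twin zH z1.
have t_nbhd_z : t \in pow_nbhd H z by apply/setIdP; rewrite t_z (subsetP (involutions_sub H)).
move: tI; rewrite -pow_iso_involutions => /imsetP[s /setIdP[sG /eqP os] def_t].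
have s_y : s \in <[y]>.
  have : s \in pow_nbhd G y by rewrite -mem_nbhd_f // nbhd_y -def_t.
  case/setIdP=> _ /orP[// | /(order2_mem_cycle os)[y_1 | ->]]; last exact: cycle_id.
  by rewrite y_1 eqxx in y1.
exists y => //; split; first by rewrite -dvdn2 -os (order_dvdG s_y).
apply/subsetP=> q qI; have qG := subsetP (inv_nonadj_sub G) q qI.
have : q \in pow_nbhd G y.
  rewrite -mem_nbhd_f // nbhd_y (subsetP sub_z) //.
  by rewrite -pow_iso_inv_nonadj imset_f.
case/setIdP=> _ /orP[// | y_q].
have s_q : s \in <[q]> by rewrite (subsetP _ s s_y) ?cycle_subG.
case/setIdP: qI => _ /forall_inP/(_ s); rewrite inE sG os => /(_ isT).
by rewrite inE qG s_q orbT.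
Qed.

Lemma cyclic_odd_part : exists K : {group gT},
  [/\ K \subset G, cyclic K, #|K| = n & {in G, forall u, (u \in K) = odd #[u]}].
Proof.
have [y yG [y_even sub_y]] := even_cycle_sup_inv_nonadj.
have /dvdnP[k def_y] : 2 %| #[y] by rewrite dvdn2.
have k_odd : odd k.
  have [// | k_even] := boolP (odd k); case/negP: (order_neq4 (groupX (#[y] %/ 4) yG)).
  move: k_even; rewrite -dvdn2 => /dvdnP[j def_k].
  have def4 : #[y] = (j * 4)%N by rewrite def_y def_k -mulnA.
  have j_gt0 : 0 < j by have := order_gt0 y; rewrite def4 muln_gt0 => /andP[].
  by rewrite orderXdiv def4 mulnK ?dvdn_mulr // mulKn.
have oK : #|<[y ^+ 2]>| = k by rewrite -orderE orderXdiv def_y ?dvdn_mull // mulnK.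
have K_odd u : u \in G -> odd #[u] -> u \in <[y ^+ 2]>.
  move=> uG /[dup] u_odd odd_u; have [-> | u1] := eqVneq u 1; first exact: group1.
  by apply: mem_cycle_sqr u_odd (subsetP sub_y u _); rewrite inv_nonadj_group !inE u1 uG odd_u.
have n_le_k : n <= k.
  have card_1I : #|1 |: inv_nonadj G| = n.
    rewrite cardsU1 inv_nonadj_group !inE eqxx -inv_nonadj_group.
    by rewrite card_inv_nonadj_group add1n prednK.
  rewrite -oK -card_1I subset_leq_card // subUset sub1set group1.
  by apply/subsetP=> u; rewrite inv_nonadj_group => /setD1P[_ /setIdP[]]; apply: K_odd.
have k_dvd_n : k %| n.
  have : k %| #|G| by rewrite -oK cardSg // cycle_subG groupX.
  by rewrite card_pow_iso_source Gauss_dvdr // coprime_pexpr // coprimen2.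
have kn : k = n by apply/eqP; rewrite eqn_leq n_le_k dvdn_leq.
exists <[y ^+ 2]>%G; split; rewrite ?cycle_subG ?groupX ?cycle_cyclic ?oK //.
move=> u uG; apply/idP/idP=> [uK | ]; last exact: K_odd.
by apply: dvdn_odd (order_dvdG uK) _; rewrite oK kn.
Qed.

End Sylow2.

Lemma pow_iso_isog_setX : G \isog H.
Proof.
have [P [sPG card_P P_exp2]] := sylow2_exponent2.
have [K [sKG K_cyclic card_K memK]] := cyclic_odd_part sPG card_P P_exp2.
have nPG : P <| G.
  apply: (normal_order_closed (pr := dvdn^~ 2)) => // x xG.
  by apply/idP/idP=> [/P_exp2 | /(mem_group_exp2 sPG card_P P_exp2 xG)].
have nKG : K <| G := normal_order_closed sKG memK.
have defG : P \x K = G.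
  apply: coprime_normal_dprod => //; last by rewrite card_P card_K card_pow_iso_source.
  by rewrite card_P card_K coprime_pexpl // coprime2n.
apply: isog_dprod defG (setX_dprod A B) _ _.
  have P_abelem : 2.-abelem P.
    by apply/exponent2_abelem/exponentP=> x /P_exp2; rewrite order_dvdn => /eqP.
  apply: isog_trans _ (isog_setX1 bT A).
  rewrite (isog_abelem_card _ P_abelem) card_P card_A eqxx andbT.
  exact/exponent2_abelem/exponentP.
apply: isog_trans _ (isog_set1X aT B).
by rewrite (isog_cyclic_card _ K_cyclic) B_cyclic card_B card_K /=.
Qed.

End PowerGraphRecognition.

Lemma pow_graph_iso_isog_setX (gT aT bT : finGroupType) (G : {group gT})
    (A : {group aT}) (B : {group bT}) m n :
  {in A, forall a, a ^+ 2 = 1} -> #|A| = (2 ^ m)%N -> 0 < m ->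
  cyclic B -> #|B| = n -> odd n ->
  pow_graph_iso G (setX A B) -> G \isog setX A B.
Proof.
move=> A_exp2 card_A m_gt0 B_cyclic card_B n_odd [f [f_inj f_onto f_adj]].
(* When m = n = 1 the involution of H dominates; both groups then have order 2. *)
have [m_or_n_gt1 | ] := boolP ((1 < m) || (1 < n)).
  exact: (pow_iso_isog_setX A_exp2 card_A m_gt0 B_cyclic card_B n_odd f_inj f_onto f_adj).
rewrite negb_or -!leqNgt => /andP[m_le1 n_le1].
have m1 : m = 1%N by apply/eqP; rewrite eqn_leq m_le1.
have n1 : n = 1%N by apply/eqP; rewrite eqn_leq n_le1; case: n n_odd {n_le1 card_B}.
have card_H : #|setX A B| = 2 by rewrite cardsX card_A card_B m1 n1.
have card_G : #|G| = 2 by rewrite -card_H -f_onto (card_inj_imset f_inj).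
rewrite (isog_cyclic_card _ (prime_cyclic _)) ?card_G // card_H eqxx andbT.
by rewrite prime_cyclic ?card_H.
Qed.

Lemma isog_pow_graph_iso (gT hT : finGroupType) (G : {group gT}) (H : {group hT}) :
  G \isog H -> pow_graph_iso G H.
Proof.
case/isogP=> f f_inj <-; exists f; split; first exact/injmP.
  by rewrite morphimEdom.
move=> x y xG yG; rewrite /pow_adj !mem_morphim // xG yG (inj_in_eq (injmP f_inj)) //.
by rewrite -!morphim_cycle // -!sub1set -!morphim_set1 // !injmSK ?sub1set ?cycle_subG.
Qed.

Lemma exp2_rV_Z2 m (a : 'rV['Z_2]_m) : a ^+ 2 = 1.
Proof.
rewrite FinRing.zmodXgE FinRing.zmod1gE; apply/rowP=> i; rewrite mulmxnE !mxE.
by case: (a ord0 i) => [[|[|]]] //= ?; apply/val_inj.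
Qed.

Lemma Zp_cyclic n : cyclic (Zp n).
Proof. by rewrite /Zp; case: ifP => _; rewrite ?Zp_cycle ?cycle_cyclic ?cyclic1. Qed.

Theorem corollary6 (gT : finGroupType) (G : {group gT}) (m n : nat) :
  0 < m -> 0 < n -> odd n ->
  pow_graph_iso G (Z2m_Zn m n) <-> G \isog Z2m_Zn m n.
Proof.
move=> m_gt0 n_gt0 n_odd; split; last exact: isog_pow_graph_iso.
apply: pow_graph_iso_isog_setX m_gt0 (Zp_cyclic n) (card_Zp n_gt0) n_odd.
- by move=> a _; apply: exp2_rV_Z2.
- by rewrite cardsT card_mx card_ord mul1n.
Qed.
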